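(* Let $m,n$ be positive integers. For all $\sigma\in\mathfrak S_{mn}$ and all partitions $\lambda$ with $\ell(\lambda)\le mn$, $l(\lambda;\sigma)\succeq l(\lambda;Id)$.
   Context: $\lambda=(\lambda_1,\dots,\lambda_{mn})$ padded with zeros; $\mathbf u\succeq\mathbf v$ means $u_i\ge v_i$ for all $i$; $Id$ is the identity permutation. Variables $s_0,\dots,s_{m-1},t_1,\dots,t_{n-2}$; $T=t_1\cdots t_{n-2}$; $x_i=s_1\cdots s_iT^i$ ($1\le i\le m-1$), $y_j=s_0s_1\cdots s_{m-1}T^{m-1}t_1\cdots t_{j-1}$ ($1\le j\le n-1$); $e(M)\in\mathbb Z^{m+n-2}$ is the exponent vector of a monomial $M$ (coordinates $s_0,\dots,s_{m-1},t_1,\dots,t_{n-2}$). Let $(z_1,\dots,z_{mn})=(1,x_1,\dots,x_{m-1},y_1,\dots,y_{n-1},x_1y_1,\dots,x_1y_{n-1},x_2y_1,\dots,x_{m-1}y_{n-1})$ and, for $\sigma\in\mathfrak S_{mn}$, $l(\lambda;\sigma)=e\big(\prod_{i=1}^{mn}z_i^{\lambda_{\sigma(i)}+mn-\sigma(i)}\big)$ (the concatenation of the paper's $l_s(\lambda;\sigma)$ and $l_t(\lambda;\sigma)$). *)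

From mathcomp Require Import all_boot all_fingroup.
Unset Printing Implicit Defensive.

(* Monomials in s_0..s_{m-1}, t_1..t_{n-2} are represented by their exponent
   vectors, as functions nat -> nat: coordinate c < m is the exponent of s_c,
   coordinate m + k - 1 (1 <= k <= n-2) is the exponent of t_k. *)
Definition mon := nat -> nat.
Definition mone : mon := fun _ => 0.
Definition mmul (f g : mon) : mon := fun c => f c + g c.
Definition mexp (f : mon) (e : nat) : mon := fun c => f c * e.
Definition mprod (s : seq mon) : mon := foldr mmul mone s.

Definition svar (a : nat) : mon := fun c => nat_of_bool (c == a).
Definition tvar (m k : nat) : mon := fun c => nat_of_bool (c == m + k.-1).

Definition Tmon (m n : nat) : mon := mprod [seq tvar m k | k <- iota 1 n.-2].
Definition xmon (m n i : nat) : mon :=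
  mmul (mprod [seq svar a | a <- iota 1 i]) (mexp (Tmon m n) i).
Definition ymon (m n j : nat) : mon :=
  mmul (mprod [seq svar a | a <- iota 0 m])
       (mmul (mexp (Tmon m n) m.-1) (mprod [seq tvar m k | k <- iota 1 j.-1])).

Definition zseq (m n : nat) : seq mon :=
  mone :: [seq xmon m n i | i <- iota 1 m.-1]
       ++ [seq ymon m n j | j <- iota 1 n.-1]
       ++ flatten [seq [seq mmul (xmon m n i) (ymon m n j) | j <- iota 1 n.-1]
                  | i <- iota 1 m.-1].

(* A partition: nonincreasing sequence of positive integers; lambda_i (1-based)
   is nth 0 lam (i-1), i.e. padded with zeros. *)
Definition is_partition (lam : seq nat) : bool :=
  sorted geq lam && all (fun x => 0 < x) lam.

(* l(lambda; sigma) = e( prod_{i=1}^{mn} z_i^{lambda_{sigma(i)} + mn - sigma(i)} ),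
   with 0-based index q = i - 1, so sigma(i) (1-based) = (sigma q).+1. *)
Definition lvec (m n : nat) (lam : seq nat) (sigma : 'S_(m * n)) : mon :=
  mprod [seq mexp (nth mone (zseq m n) q)
                  (nth 0 lam (sigma q) + (m * n - (sigma q).+1))
        | q : 'I_(m * n) <- enum 'I_(m * n)].

Definition exp_ge (m n : nat) (u v : mon) : Prop :=
  forall c, c < m + n.-2 -> v c <= u c.

(* In each coordinate c, the exponent (z_q)_c is nondecreasing in q (read off
   from explicit formulas for the coordinates of x_i and y_j), while the power
   lambda_k + mn - k - 1 is nonincreasing in k.  Coordinate c of l(lambda; sigma)
   is therefore sum_q w_q a_(sigma q) with w nondecreasing and a nonincreasing,
   and by the rearrangement inequality the identity minimises this sum.  The
   rearrangement inequality is proved level by level: a = sum_t [t < a], each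
   level set {q | t < a q} is an initial segment, and on an initial segment a
   nondecreasing weight has the least sum among all sets of the same size. *)

From mathcomp Require Import all_boot all_fingroup zify.

Section Rearrangement.

Variable N : nat.
Implicit Types (w : 'I_N -> nat) (s : 'S_N).

Lemma leq_sum_downset w (B A : {set 'I_N}) :
  {homo w : i j / i <= j} ->
  (forall i j : 'I_N, i <= j -> j \in B -> i \in B) ->
  #|B| <= #|A| -> \sum_(q in B) w q <= \sum_(q in A) w q.
Proof.
move=> w_homo B_down leBA.
rewrite (big_setID A) [leqRHS](big_setID B) /= setIC leq_add2l.
have leD : #|B :\: A| <= #|A :\: B|.
  by rewrite -(leq_add2l #|B :&: A|) cardsID setIC cardsID.
have sepD i j : i \in B :\: A -> j \in A :\: B -> w i <= w j.
  rewrite !inE => /andP[_ Bi] /andP[Bj _]; apply: w_homo.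
  by rewrite leqNgt; apply: contra Bj => /ltnW /B_down; apply.
set v := \max_(q in B :\: A) w q.
apply: (@leq_trans (#|B :\: A| * v)).
  by rewrite -sum_nat_const; apply: leq_sum => q Dq; apply: leq_bigmax_cond.
apply: (leq_trans (leq_mul leD (leqnn v))).
rewrite -sum_nat_const; apply: leq_sum => j Dj.
by apply/bigmax_leqP => i Di; apply: sepD.
Qed.

Lemma sum_mul_layers w (f : 'I_N -> nat) K : (forall q, f q <= K) ->
  \sum_q w q * f q = \sum_(t < K) \sum_(q in [set q | t < f q]) w q.
Proof.
move=> f_le; under [RHS]eq_bigr => t _ do rewrite big_mkcond.
rewrite [RHS]exchange_big /=; apply: eq_bigr => q _.
have count_ltn x : \sum_(t < K) (t < x) = minn x K.
  by elim: K {f_le} => [|K IH]; rewrite ?big_ord0 ?big_ord_recr /= ?IH; lia.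
rewrite -[in LHS](minn_idPl (f_le q)) -count_ltn big_distrr /=.
by apply: eq_bigr => t _; rewrite inE; case: (t < f q); rewrite ?muln1 ?muln0.
Qed.

Lemma rearrangement_leq w (a : 'I_N -> nat) s :
  {homo w : i j / i <= j} -> {homo a : i j /~ i <= j} ->
  \sum_q w q * a q <= \sum_q w q * a (s q).
Proof.
move=> w_homo a_homo; set K := \max_q a q.
have a_le q : a q <= K by apply: leq_bigmax.
rewrite !(sum_mul_layers w _ K) //; apply: leq_sum => t _.
apply: leq_sum_downset => // [i j le_ij|].
  by rewrite !inE => /leq_trans; apply; apply: a_homo.
have -> : [set q | t < a (s q)] = s @^-1: [set q | t < a q].
  by apply/setP => q; rewrite !inE.
by rewrite card_preimset //; apply: perm_inj.
Qed.

End Rearrangement.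

Lemma pairwise_leq_map_iota (f : nat -> nat) a k :
  (forall i j, a <= i < j -> j < a + k -> f i <= f j) ->
  pairwise leq [seq f i | i <- iota a k].
Proof.
move=> f_homo; rewrite pairwise_map.
apply: (@sub_in_pairwise _ (mem (iota a k)) ltn); last 2 first.
- exact: allss.
- by rewrite -sorted_pairwise ?iota_ltn_sorted //; apply: ltn_trans.
by move=> i j; rewrite !mem_iota => /andP[ai _] /andP[_ jk] ij; apply: f_homo; lia.
Qed.

Lemma pairwise_leq_allpairs_iota (F : nat -> nat -> nat) a k b l :
  (forall i i' j j', a <= i -> i' < a + k -> b <= j < b + l -> b <= j' < b + l ->
     (i < i') || (i == i') && (j < j') -> F i j <= F i' j') ->
  pairwise leq [seq F i j | i <- iota a k, j <- iota b l].
Proof.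
elim: k a => [|k IH] a F_homo //=.
rewrite pairwise_cat; apply/and3P; split.
- apply/allrelP => _ _ /mapP[j jl ->] /allpairsP[[i' j'] /= [i'k j'l ->]].
  by move: jl i'k j'l; rewrite !mem_iota => *; apply: F_homo; lia.
- by apply: pairwise_leq_map_iota => j j' *; apply: F_homo; lia.
- by apply: IH => i i' j j' *; apply: F_homo; lia.
Qed.

Lemma pairwise_leq_zshape (X Y : nat -> nat) p q :
  (forall i i', 0 < i < i' -> i' <= p -> X i <= X i') ->
  (forall j j', 0 < j < j' -> j' <= q -> Y j <= Y j') ->
  (forall i j, 0 < i <= p -> 0 < j <= q -> X i <= Y j) ->
  (forall i j j', 0 < i <= p -> 0 < j <= q -> 0 < j' <= q -> Y j <= X i + Y j') ->
  (forall i i' j j', 0 < i < i' -> i' <= p -> 0 < j <= q -> 0 < j' <= q ->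
     X i + Y j <= X i' + Y j') ->
  pairwise leq (0 :: [seq X i | i <- iota 1 p] ++ [seq Y j | j <- iota 1 q]
                  ++ [seq X i + Y j | i <- iota 1 p, j <- iota 1 q]).
Proof.
move=> X_homo Y_homo le_XY le_Y_XY le_XY_lex.
rewrite pairwise_cons !pairwise_cat allrel_catr.
repeat (apply/andP; split).
- by apply/allP.
- apply/allrelP => _ _ /mapP[i + ->] /mapP[j + ->].
  by rewrite !mem_iota => *; apply: le_XY; lia.
- apply/allrelP => _ _ /mapP[i + ->] /allpairsP[[i' j] /= [+ + ->]].
  rewrite !mem_iota => *; apply: leq_trans (leq_addl (X i') _).
  by apply: le_XY; lia.
- by apply: pairwise_leq_map_iota => *; apply: X_homo; lia.
- apply/allrelP => _ _ /mapP[j + ->] /allpairsP[[i j'] /= [+ + ->]].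
  by rewrite !mem_iota => *; apply: le_Y_XY; lia.
- by apply: pairwise_leq_map_iota => *; apply: Y_homo; lia.
- apply: pairwise_leq_allpairs_iota => i i' j j' *.
  have [lt_ii'|le_i'i] := ltnP i i'; first by apply: le_XY_lex; lia.
  have -> : i' = i by lia.
  by rewrite leq_add2l; apply: Y_homo; lia.
Qed.

Lemma mprod_coord (l : seq mon) c : mprod l c = \sum_(f <- l) f c.
Proof. by elim: l => [|f l IH]; rewrite ?big_nil ?big_cons //= /mmul IH. Qed.

Lemma mprod_svar_iota a k c :
  mprod [seq svar i | i <- iota a k] c = (a <= c < a + k).
Proof. by elim: k a => [|k IH] a /=; rewrite ?/mmul ?IH /mone /svar; lia. Qed.

Lemma mprod_tvar_iota m a k c :
  mprod [seq tvar m i | i <- iota a.+1 k] c = (m + a <= c < m + a + k).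
Proof. by elim: k a => [|k IH] a /=; rewrite ?/mmul ?IH /mone /tvar /=; lia. Qed.

Lemma xmon_coord m n i c :
  xmon m n i c = (0 < c <= i) + (m <= c < m + n.-2) * i.
Proof. by rewrite /xmon /mmul /mexp mprod_svar_iota /Tmon mprod_tvar_iota; lia. Qed.

Lemma ymon_coord m n j c :
  ymon m n j c = (c < m) + (m <= c < m + n.-2) * m.-1 + (m <= c < m + j.-1).
Proof.
by rewrite /ymon /mmul /mexp mprod_svar_iota /Tmon !(mprod_tvar_iota m 0); lia.
Qed.

Lemma zseq_coord m n c : [seq f c | f <- zseq m n] =
  0 :: [seq xmon m n i c | i <- iota 1 m.-1] ++ [seq ymon m n j c | j <- iota 1 n.-1]
    ++ [seq xmon m n i c + ymon m n j c | i <- iota 1 m.-1, j <- iota 1 n.-1].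
Proof.
rewrite /zseq /= !map_cat map_flatten -!map_comp; congr (_ :: _ ++ _ ++ flatten _).
by apply: eq_map => i /=; rewrite -map_comp.
Qed.

Lemma zseq_coord_pairwise m n c : pairwise leq [seq f c | f <- zseq m n].
Proof.
by rewrite zseq_coord; apply: pairwise_leq_zshape => *;
  rewrite ?xmon_coord ?ymon_coord; lia.
Qed.

Lemma size_zseq m n : 0 < m -> 0 < n -> size (zseq m n) = m * n.
Proof.
move=> m_gt0 n_gt0.
by rewrite /zseq /= !size_cat !size_map size_allpairs !size_iota; nia.
Qed.

Lemma nth_zseq_coord_homo m n c i j : i <= j -> j < size (zseq m n) ->
  nth mone (zseq m n) i c <= nth mone (zseq m n) j c.
Proof.
move=> le_ij j_lt; have i_lt := leq_ltn_trans le_ij j_lt.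
rewrite -!(nth_map mone 0 (fun f => f c)) //.
have := zseq_coord_pairwise m n c; rewrite -sorted_pairwise; last exact: leq_trans.
by move/(sorted_leq_nth leq_trans leqnn 0); apply; rewrite ?inE ?size_map.
Qed.

Lemma nth_sorted_geq (s : seq nat) i j : sorted geq s -> i <= j ->
  nth 0 s j <= nth 0 s i.
Proof.
move=> s_sorted le_ij; have [j_lt|j_ge] := ltnP j (size s); last by rewrite nth_default.
have geq_trans : transitive geq by move=> x y z /= le_xy le_zx; apply: leq_trans le_zx le_xy.
apply: (sorted_leq_nth geq_trans leqnn 0 s_sorted) => //; rewrite inE //.
exact: leq_ltn_trans le_ij j_lt.
Qed.

Lemma lvec_coord m n lam s c : lvec m n lam s c =
  \sum_(q < m * n) nth mone (zseq m n) q c * (nth 0 lam (s q) + (m * n - (s q).+1)).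
Proof. by rewrite /lvec mprod_coord big_map big_enum. Qed.

Theorem mainTheorem14 (m n : nat) (hm : 0 < m) (hn : 0 < n)
  (sigma : 'S_(m * n)) (lam : seq nat)
  (hlam : is_partition lam) (hlen : size lam <= m * n) :
  exp_ge m n (lvec m n lam sigma) (lvec m n lam 1%g).
Proof.
move=> c _; rewrite !lvec_coord; under eq_bigr do rewrite perm1.
case/andP: hlam => lam_sorted _.
apply: rearrangement_leq => i j le_ij.
  by apply: nth_zseq_coord_homo; rewrite ?size_zseq.
by apply: leq_add; [apply: nth_sorted_geq | apply: leq_sub2l].
Qed.
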